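(* For every two integers $a,b$ with $2\le a\le b$, there exists a finite, simple, connected graph $G$ of order $b$ with $\dim_{wt}(G)=a$.
   Context: $d(x,y)$ is the shortest-path distance. A set $W\subseteq V(G)$ is a resolving set if for every two distinct vertices $y,z$ there is $x\in W$ with $d(y,x)\ne d(z,x)$. A set $W$ is a weak total resolving set (WTR-set) if $W$ is resolving and, for every $w\in W$ and every $x\in V(G)\setminus W$, there is $w'\in W\setminus\{w\}$ with $d(x,w')\ne d(w,w')$. $\dim_{wt}(G)$ is the minimum cardinality of a WTR-set. *)

From mathcomp Require Import all_boot.
Set Implicit Arguments. Unset Strict Implicit. Unset Printing Implicit Defensive.

Definition simple_graph (T : finType) (e : rel T) : Prop :=
  symmetric e /\ irreflexive e.

Definition connected_graph (T : finType) (e : rel T) : Prop :=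
  forall x y : T, connect e x y.

Fixpoint ball (T : finType) (e : rel T) (n : nat) (x : T) : {set T} :=
  match n with
  | 0 => [set x]
  | n'.+1 => ball e n' x :|: [set z | [exists y in ball e n' x, e y z]]
  end.

(* shortest-path distance: least n with y in the n-ball around x
   (search range 0..#|T|-1 suffices for connected graphs). *)
Definition dist (T : finType) (e : rel T) (x y : T) : nat :=
  find (fun n => y \in ball e n x) (iota 0 #|T|).

Definition resolving (T : finType) (e : rel T) (W : {set T}) : Prop :=
  forall y z : T, y != z -> exists2 x, x \in W & dist e y x != dist e z x.

Definition wtr_set (T : finType) (e : rel T) (W : {set T}) : Prop :=
  resolving e W /\
  forall w x, w \in W -> x \notin W ->
    exists2 w', w' \in W :\ w & dist e x w' != dist e w w'.

Definition wt_dim_eq (T : finType) (e : rel T) (k : nat) : Prop :=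
  (exists W : {set T}, wtr_set e W /\ #|W| = k) /\
  (forall W : {set T}, wtr_set e W -> k <= #|W|).

(* The lollipop graph on {0, ..., b-1}: a clique on {0, ..., a-1} with the
   path a-1, a, ..., b-1 hanging from the vertex a-1.  The clique vertices
   other than a-1 are pairwise twins (equidistant from every other vertex), so
   a weak total resolving set must contain all a-1 of them; these alone fail
   the total condition at the pair (0, a-1), which have the same distance to
   every other twin, so one more vertex is needed.  Conversely the twins
   together with the far end b-1 of the path form a weak total resolving set. *)

From mathcomp Require Import all_boot zify.
Set Implicit Arguments. Unset Strict Implicit.

Lemma dist_eq0 (T : finType) (e : rel T) x y : (dist e x y == 0) = (y == x).
Proof.
rewrite /dist; have : 0 < #|T| by apply/card_gt0P; exists x.
by case: #|T| => // n _; rewrite /= inE; case: (y == x).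
Qed.

Lemma ball_connect (T : finType) (e : rel T) x n y :
  y \in ball e n x -> connect e x y.
Proof.
elim: n y => [|n IH] y /=; first by rewrite inE => /eqP ->.
rewrite !inE => /orP[/IH // | /existsP[z /andP[/IH xz zy]]].
exact: connect_trans xz (connect1 zy).
Qed.

Lemma find_iota_leq k m N :
  m <= k < m + N -> find (fun n => k <= n) (iota m N) = k - m.
Proof.
elim: N m => [|N IH] m; first by lia.
move=> km /=; case: ifP => [km'|/negbT km']; last rewrite IH; lia.
Qed.

Section DistanceLabelling.
Variables (T : finType) (e : rel T) (x : T) (D : T -> nat).
Hypothesis D_eq0 : forall y, (D y == 0) = (y == x).
Hypothesis D_edge : forall y z, e y z -> D z <= (D y).+1.
Hypothesis D_step : forall z, 0 < D z -> exists2 y, e y z & (D y).+1 = D z.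

Lemma ball_labelling n : ball e n x = [set y | D y <= n].
Proof.
elim: n => [|n IH] /=; apply/setP => z; rewrite !inE.
  by rewrite leqn0 D_eq0.
rewrite IH inE; apply/orP/idP => [[//|]|]; first by move/leqW.
  case/existsP => y /andP[]; rewrite inE => Dy /D_edge Dz.
  by apply: leq_trans Dz _; rewrite ltnS.
rewrite leq_eqVlt ltnS => /orP[/eqP Dz|]; last by left.
have [|y yz Dy] := D_step (z := z); first by rewrite Dz.
by right; apply/existsP; exists y; rewrite inE yz andbT -ltnS Dy Dz.
Qed.

Lemma connect_labelling y : connect e x y.
Proof. by apply: (@ball_connect _ _ _ (D y)); rewrite ball_labelling inE. Qed.

Hypothesis D_small : forall y, D y < #|T|.

Lemma dist_labelling y : dist e x y = D y.
Proof.
rewrite /dist (@eq_find _ _ (fun n => D y <= n)); last first.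
  by move=> n; rewrite ball_labelling inE.
by rewrite find_iota_leq ?subn0 // D_small.
Qed.

End DistanceLabelling.

Section WeakTotalResolving.
Variables (T : finType) (e : rel T).

Lemma resolving_outside (W : {set T}) :
  (forall y z, y \notin W -> z \notin W -> y != z ->
     exists2 x, x \in W & dist e y x != dist e z x) ->
  resolving e W.
Proof.
move=> res y z yz; have [yW|yW] := boolP (y \in W).
  exists y => //; have /eqP -> : dist e y y == 0 by rewrite dist_eq0.
  by rewrite eq_sym dist_eq0.
have [zW|zW] := boolP (z \in W); last exact: res.
exists z => //; have /eqP -> : dist e z z == 0 by rewrite dist_eq0.
by rewrite dist_eq0 eq_sym.
Qed.

Lemma wtr_set_card_gt1 (W : {set T}) : 1 < #|T| -> wtr_set e W -> 1 < #|W|.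
Proof.
case/card_gt1P => y [z [_ _ yz]] [res total]; rewrite ltnNge; apply/negP => W1.
have [w wW _] := res _ _ yz.
have Ww : W :\ w = set0 by apply: cards0_eq; move: W1; rewrite (cardsD1 w) wW; lia.
have notW v : v != w -> v \notin W.
  move=> vw; apply/negP => vW; have : v \in W :\ w by rewrite !inE vw.
  by rewrite Ww inE.
have [v vW] : exists v, v \notin W.
  have [yw|yw] := eqVneq y w; last by exists y; apply: notW.
  by exists z; apply: notW; rewrite -yw eq_sym.
by have [w'] := total _ _ wW vW; rewrite Ww inE.
Qed.

Lemma twin_mem_wtr_set (W : {set T}) c c' :
  c != c' -> (forall t, t != c -> t != c' -> dist e c t = dist e c' t) ->
  wtr_set e W -> c \in W.
Proof.
move=> cc' twins [res total]; apply/negPn/negP => cW.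
have c'W : c' \in W.
  have [t tW] := res _ _ cc'; have [tc'|tc'] := eqVneq t c'; first by rewrite -tc'.
  by rewrite twins ?eqxx //; apply: contraTneq tW => ->.
have [t] := total _ _ c'W cW; rewrite !inE => /andP[tc' tW].
by rewrite twins ?eqxx //; apply: contraTneq tW => ->.
Qed.

End WeakTotalResolving.

Lemma card_ord_lt n k : k <= n -> #|[set i : 'I_n | i < k]| = k.
Proof.
move=> kn; have -> : [set i : 'I_n | i < k] = [set widen_ord kn i | i in 'I_k].
  apply/setP => i; rewrite inE; apply/idP/imsetP => [ik|[j _ ->]]; last exact: (ltn_ord j).
  by exists (Ordinal ik) => //; apply: val_inj.
by rewrite card_imset ?card_ord //; move=> i j /(congr1 val) /= /val_inj.
Qed.

Definition lollipop_edge (a i j : nat) : bool :=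
  (i != j) &&
  [|| (i < a) && (j < a), (i.+1 == j) && (a.-1 <= i) | (j.+1 == i) && (a.-1 <= j)].

(* Walk along the path between the projections [maxn _ a.-1] of the endpoints,
   plus one clique edge for each endpoint other than the hub [a.-1]. *)
Definition lollipop_dist (a i j : nat) : nat :=
  if i == j then 0 else if (i < a) && (j < a) then 1 else
  (maxn i a.-1 - maxn j a.-1) + (maxn j a.-1 - maxn i a.-1)
  + (i < a.-1) + (j < a.-1).

(* A neighbour of [z] one step closer to [x]. *)
Definition lollipop_step (a x z : nat) : nat :=
  if z < a then (if x < a then x else if z == a.-1 then a else a.-1)
  else if z < x then z.+1 else z.-1.

Ltac case_arith := rewrite /lollipop_step; repeat (case: ifP => ?);
  rewrite /lollipop_edge /lollipop_dist; repeat (case: ifP => ?); lia.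

Section LollipopArithmetic.
Variable a : nat.
Hypothesis a_ge2 : 2 <= a.

Lemma lollipop_edge_sym : symmetric (lollipop_edge a).
Proof. move=> i j; case_arith. Qed.

Lemma lollipop_edge_irr : irreflexive (lollipop_edge a).
Proof. move=> i; case_arith. Qed.

Lemma lollipop_dist_eq0 x y : (lollipop_dist a x y == 0) = (y == x).
Proof. case_arith. Qed.

Lemma lollipop_dist_edge x y z :
  lollipop_edge a y z -> lollipop_dist a x z <= (lollipop_dist a x y).+1.
Proof. case_arith. Qed.

Lemma lollipop_dist_twins c c' t : c < a.-1 -> c' < a.-1 -> t != c -> t != c' ->
  lollipop_dist a c t = lollipop_dist a c' t.
Proof. case_arith. Qed.

Lemma lollipop_dist_hub_0 c : c < a.-1 -> c != 0 ->
  lollipop_dist a a.-1 c = lollipop_dist a 0 c.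
Proof. case_arith. Qed.

Section Bounded.
Variable b : nat.
Hypothesis a_le_b : a <= b.

Lemma lollipop_dist_lt x y : x < b -> y < b -> lollipop_dist a x y < b.
Proof. case_arith. Qed.

Section Step.
Variables x z : nat.
Hypotheses (x_lt_b : x < b) (z_lt_b : z < b) (xz : 0 < lollipop_dist a x z).

Lemma lollipop_step_lt : lollipop_step a x z < b.
Proof. move: xz; case_arith. Qed.

Lemma lollipop_step_edge : lollipop_edge a (lollipop_step a x z) z.
Proof. move: xz; case_arith. Qed.

Lemma lollipop_dist_step :
  (lollipop_dist a x (lollipop_step a x z)).+1 = lollipop_dist a x z.
Proof. move: xz; case_arith. Qed.

End Step.

Lemma lollipop_dist_end_inj y z : y < b -> z < b -> a.-1 <= y -> a.-1 <= z ->
  y != z -> lollipop_dist a y b.-1 != lollipop_dist a z b.-1.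
Proof. move=> *; apply/eqP; case_arith. Qed.

Lemma lollipop_dist_end_twin x c : x < b.-1 -> a.-1 <= x -> c < a.-1 ->
  lollipop_dist a x b.-1 != lollipop_dist a c b.-1.
Proof. move=> *; apply/eqP; case_arith. Qed.

Lemma lollipop_dist_end_0 x : x < b.-1 -> a.-1 <= x ->
  lollipop_dist a x 0 != lollipop_dist a b.-1 0.
Proof. move=> *; apply/eqP; case_arith. Qed.

End Bounded.

End LollipopArithmetic.

Section Lollipop.
Variables a b : nat.
Hypotheses (a_ge2 : 2 <= a) (a_le_b : a <= b).

Definition lollipop : rel 'I_b := fun i j => lollipop_edge a i j.

Definition twins : {set 'I_b} := [set i : 'I_b | i < a.-1].

Definition lollipop_basis : {set 'I_b} :=
  [set i : 'I_b | (i < a.-1) || (i == b.-1 :> nat)].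

Let b_gt0 : 0 < b. Proof. lia. Qed.
Let vertex0 : 'I_b := Ordinal b_gt0.
Let last_lt : b.-1 < b. Proof. lia. Qed.
Let vertex_last : 'I_b := Ordinal last_lt.
Let hub_lt : a.-1 < b. Proof. lia. Qed.
Let hub : 'I_b := Ordinal hub_lt.

Lemma lollipop_simple : simple_graph lollipop.
Proof. by split=> [i j|i]; [apply: lollipop_edge_sym | apply: lollipop_edge_irr]. Qed.

Section FromVertex.
Variable x : 'I_b.
Let D (y : 'I_b) := lollipop_dist a x y.

Let D_eq0 y : (D y == 0) = (y == x).
Proof. by rewrite /D lollipop_dist_eq0. Qed.

Let D_edge y z : lollipop y z -> D z <= (D y).+1.
Proof. rewrite /D; exact: lollipop_dist_edge. Qed.

Let D_step z : 0 < D z -> exists2 y, lollipop y z & (D y).+1 = D z.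
Proof.
rewrite /D => xz; have [x_lt z_lt] := (ltn_ord x, ltn_ord z).
exists (Ordinal (lollipop_step_lt a_ge2 a_le_b x_lt z_lt xz)).
  rewrite /lollipop /=; exact: (lollipop_step_edge a_ge2 a_le_b x_lt z_lt xz).
exact: (lollipop_dist_step a_ge2 a_le_b x_lt z_lt xz).
Qed.

Lemma lollipop_connect y : connect lollipop x y.
Proof. exact: connect_labelling D_eq0 D_edge D_step y. Qed.

Lemma dist_lollipop y : dist lollipop x y = lollipop_dist a x y.
Proof.
apply: (dist_labelling D_eq0 D_edge D_step) => z.
by rewrite card_ord lollipop_dist_lt.
Qed.

End FromVertex.

Lemma lollipop_connected : connected_graph lollipop.
Proof. exact: lollipop_connect. Qed.

Lemma card_twins : #|twins| = a.-1.
Proof. by rewrite card_ord_lt //; lia. Qed.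

Lemma card_lollipop_basis : #|lollipop_basis| = a.
Proof.
have -> : lollipop_basis = vertex_last |: twins.
  by apply/setP => i; rewrite !inE orbC.
by rewrite cardsU1 card_twins inE /=; case: ltnP; lia.
Qed.

Lemma lollipop_basis_wtr : wtr_set lollipop lollipop_basis.
Proof.
have notin i : (i \notin lollipop_basis) = (a.-1 <= i < b.-1).
  by rewrite inE negb_or -leqNgt; have := ltn_ord i; lia.
split.
  apply: resolving_outside => y z; rewrite !notin => y_out z_out yz.
  exists vertex_last; first by rewrite inE eqxx orbT.
  by rewrite !dist_lollipop; apply: lollipop_dist_end_inj => //; lia.
move=> w x; rewrite notin inE => wW x_out; case/orP: wW => [w_twin|/eqP w_last].
  exists vertex_last; first by rewrite !inE eqxx orbT andbT -val_eqE /=; lia.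
  by rewrite !dist_lollipop; apply: lollipop_dist_end_twin => //; lia.
exists vertex0; first by rewrite !inE -val_eqE /= w_last; lia.
by rewrite !dist_lollipop w_last; apply: lollipop_dist_end_0 => //; lia.
Qed.

Lemma twins_not_wtr : ~ wtr_set lollipop twins.
Proof.
case=> _ /(_ vertex0 hub) []; rewrite ?inE /=; try lia.
move=> c; rewrite !inE -val_eqE /= => /andP[c0 c_twin].
by rewrite !dist_lollipop lollipop_dist_hub_0 ?eqxx.
Qed.

Lemma twins_sub_wtr_set W : 3 <= a -> wtr_set lollipop W -> twins \subset W.
Proof.
move=> a_ge3 wtr; apply/subsetP => c; rewrite inE => c_twin.
have c'_lt : (c == 0 :> nat) < b by lia.
apply: (@twin_mem_wtr_set _ _ _ _ (Ordinal c'_lt)) wtr.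
  by apply/eqP => /(congr1 val) /=; case: eqP; lia.
move=> t tc tc'; rewrite !dist_lollipop; apply: lollipop_dist_twins => //=; lia.
Qed.

Lemma wtr_set_lollipop_card W : wtr_set lollipop W -> a <= #|W|.
Proof.
move=> wtr; have [a2|a_ge3] := leqP a 2.
  by apply: leq_trans (wtr_set_card_gt1 _ wtr); rewrite ?card_ord; lia.
have : twins \proper W.
  rewrite properEneq twins_sub_wtr_set // andbT.
  by apply/eqP => twinsW; apply: twins_not_wtr; rewrite twinsW.
by move/proper_card; rewrite card_twins prednK //; lia.
Qed.

End Lollipop.

Arguments lollipop : clear implicits.

Theorem theorem13 (a b : nat) : 2 <= a -> a <= b ->
  exists e : rel 'I_b,
    simple_graph e /\ connected_graph e /\ wt_dim_eq e a.
Proof.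
move=> a_ge2 a_le_b; exists (lollipop a b).
split; first exact: lollipop_simple.
split; first exact: lollipop_connected.
split; last exact: wtr_set_lollipop_card.
exists (lollipop_basis a b); split; first exact: lollipop_basis_wtr.
exact: card_lollipop_basis.
Qed.
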